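(* Let $0<c<1$ and let $(t_n)_{n\geq1}$ satisfy $1<t_n<2$ for all $n$. Put $a_n=c^{t_n^n}$ and $F_n(z,w)=(z^2+a_nw,\ a_nz)$. Let $\Omega=\{(z,w)\in\mathbb{C}^2:F_n\circ\cdots\circ F_1(z,w)\to0\}$, let $K\subseteq\Omega$ be compact, and set $\delta_n=\max\{|z_n|,|w_n|:(z,w)\in K\}$ where $(z_n,w_n)=F_n\circ\cdots\circ F_1(z,w)$. Suppose that for arbitrarily large $n$ there is an integer $k(n)\geq1$ with $t_{n+k(n)+1}\leq 2^{\frac{k(n)}{n+k(n)+1}}$. Then there exist arbitrarily large $n$ with $\delta_n\leq a_{n+1}$. *)

From Stdlib Require Import Reals List.
From Coquelicot Require Import Coquelicot.
Open Scope R_scope.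

Definition aseq (c : R) (t : nat -> R) (n : nat) : R := Rpower c (t n ^ n).

Definition Fmap (c : R) (t : nat -> R) (n : nat) (p : C * C) : C * C :=
  (Cplus (Cmult (fst p) (fst p)) (Cmult (RtoC (aseq c t n)) (snd p)),
   Cmult (RtoC (aseq c t n)) (fst p)).

Fixpoint orbit (c : R) (t : nat -> R) (n : nat) (p : C * C) : C * C :=
  match n with
  | O => p
  | S m => Fmap c t (S m) (orbit c t m p)
  end.

Definition Omega (c : R) (t : nat -> R) (p : C * C) : Prop :=
  is_lim_seq (fun n => Cmod (fst (orbit c t n p))) 0 /\
  is_lim_seq (fun n => Cmod (snd (orbit c t n p))) 0.

Definition compact_C2 (K : C * C -> Prop) : Prop :=
  forall (I : Type) (U : I -> C * C -> Prop),
    (forall i, @open (prod_UniformSpace C_UniformSpace C_UniformSpace) (U i)) ->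
    (forall x, K x -> exists i, U i x) ->
    exists l : list I, forall x, K x -> exists i, In i l /\ U i x.

(* delta_n <= r, where delta_n = max {|z_n|,|w_n| : (z,w) in K} *)
Definition delta_le (c : R) (t : nat -> R) (K : C * C -> Prop) (n : nat) (r : R) : Prop :=
  forall p, K p -> Cmod (fst (orbit c t n p)) <= r /\ Cmod (snd (orbit c t n p)) <= r.

From Stdlib Require Import Reals List Lra Lia Classical.
From Coquelicot Require Import Coquelicot.
Open Scope R_scope.

(* Assume delta_n > a_(n+1) for
   every n >= N.  With r = c(1-c)/2 we argue in three steps.
   1. (Persistence.)  F_n maps the bidisc of radius s into the bidisc of
      radius s^2 + a_n s; since a_n <= c, the bidisc of radius r <= 1 - c
      is forward invariant.  Every point of K enters it (K lies in Omega),
      the entrance conditions are open, so by compactness there is n0 with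
      delta_n <= r for all n >= n0.
   2. (Doubling.)  While delta_m > a_(m+1), the same estimate gives
      delta_(m+1) <= 2 delta_m^2, hence delta_(n+k) <= (2r)^(2^k) / 2.
   3. (Arithmetic.)  If t_(n+k+1) <= 2^(k/(n+k+1)) then
      a_(n+k+1) = c^(t^(n+k+1)) >= c^(2^k) >= (2r)^(2^k), so
      delta_(n+k) <= a_(n+k+1), contradicting the assumption at n+k. *)

Notation C2 := (prod_UniformSpace C_UniformSpace C_UniformSpace).

Definition bounded (s : R) (q : C * C) : Prop :=
  Cmod (fst q) <= s /\ Cmod (snd q) <= s.

Lemma bounded_mono s s' q : s <= s' -> bounded s q -> bounded s' q.
Proof. intros Hs [H1 H2]; split; lra. Qed.

Lemma delta_le_mono c t K n s s' :
  s <= s' -> delta_le c t K n s -> delta_le c t K n s'.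
Proof. intros Hs H p Hp; exact (bounded_mono s s' _ Hs (H p Hp)). Qed.

(* Continuity into C does not depend on whether C carries its own uniform
   structure or the one coming from its absolute value (same filters). *)
Lemma continuous_C_abs (U : UniformSpace) (f : U -> C) x :
  @continuous U C_UniformSpace f x ->
  @continuous U (AbsRing_UniformSpace C_AbsRing) f x.
Proof. intros H P HP; apply H, locally_C, HP. Qed.

Lemma continuous_abs_C (U : UniformSpace) (f : U -> C) x :
  @continuous U (AbsRing_UniformSpace C_AbsRing) f x ->
  @continuous U C_UniformSpace f x.
Proof. intros H P HP; apply H, locally_C, HP. Qed.

Lemma Fmap_continuous c t m (q : C2) : continuous (Fmap c t m : C2 -> C2) q.
Proof.
  set (a := RtoC (aseq c t m)).
  assert (Hfst : @continuous C2 (AbsRing_UniformSpace C_AbsRing) (fun q : C2 => fst q) q)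
    by (apply continuous_C_abs; destruct q; apply continuous_fst).
  assert (Hsnd : @continuous C2 (AbsRing_UniformSpace C_AbsRing) (fun q : C2 => snd q) q)
    by (apply continuous_C_abs; destruct q; apply continuous_snd).
  assert (Ha : @continuous C2 (AbsRing_UniformSpace C_AbsRing) (fun _ : C2 => a) q)
    by apply continuous_const.
  assert (H1 : @continuous C2 C_UniformSpace
                 (fun q : C2 => Cplus (Cmult (fst q) (fst q)) (Cmult a (snd q))) q).
  { apply continuous_abs_C.
    apply (continuous_plus (K := C_AbsRing) (V := AbsRing_NormedModule C_AbsRing)
             (fun q : C2 => @mult C_AbsRing (fst q) (fst q))
             (fun q : C2 => @mult C_AbsRing a (snd q)));
      apply continuous_mult; assumption. }
  assert (H2 : @continuous C2 C_UniformSpace (fun q : C2 => Cmult a (fst q)) q).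
  { apply continuous_abs_C.
    apply (continuous_mult (K := C_AbsRing) (fun _ => a) (fun q : C2 => fst q)); assumption. }
  eapply continuous_ext; [intros; reflexivity|].
  apply (continuous_comp_2 (U := C2) (V := C_UniformSpace) (W := C_UniformSpace) (X := C2)
           _ _ pair q H1 H2).
  eapply continuous_ext; [|apply continuous_id]. intros [x y]; reflexivity.
Qed.

Lemma orbit_continuous c t n (p : C2) : continuous (orbit c t n : C2 -> C2) p.
Proof.
  induction n as [|n IH]; simpl.
  - apply continuous_id.
  - apply (continuous_comp (U := C2) (V := C2) (W := C2) (orbit c t n) (Fmap c t (S n))).
    + exact IH.
    + apply Fmap_continuous.
Qed.

Lemma Cmod_comp_continuous (f : C2 -> C) (p : C2) :
  @continuous C2 C_UniformSpace f p -> continuous (fun p => Cmod (f p)) p.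
Proof.
  intros Hf.
  apply (continuous_comp (U := C2) (V := C_UniformSpace) (W := R_UniformSpace) f Cmod).
  - exact Hf.
  - apply (filterlim_norm (K := C_AbsRing) (V := C_NormedModule)).
Qed.

Lemma orbit_small_open c t n r :
  @open C2 (fun p => Cmod (fst (orbit c t n p)) < r /\ Cmod (snd (orbit c t n p)) < r).
Proof.
  intros p [H1 H2].
  assert (Hfst : continuous (fun p => Cmod (fst (orbit c t n p))) p).
  { apply Cmod_comp_continuous.
    apply (continuous_comp (U := C2) (V := C2) (W := C_UniformSpace) (orbit c t n) fst).
    - apply orbit_continuous.
    - destruct (orbit c t n p); apply continuous_fst. }
  assert (Hsnd : continuous (fun p => Cmod (snd (orbit c t n p))) p).
  { apply Cmod_comp_continuous.
    apply (continuous_comp (U := C2) (V := C2) (W := C_UniformSpace) (orbit c t n) snd).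
    - apply orbit_continuous.
    - destruct (orbit c t n p); apply continuous_snd. }
  apply filter_and.
  - apply (Hfst (fun y => y < r)), open_lt, H1.
  - apply (Hsnd (fun y => y < r)), open_lt, H2.
Qed.

Lemma Rpower_antimono c x y : 0 < c < 1 -> x <= y -> Rpower c y <= Rpower c x.
Proof.
  intros Hc Hxy. unfold Rpower.
  assert (ln c < 0) by (rewrite <- ln_1; apply ln_increasing; lra).
  destruct (Req_dec (y * ln c) (x * ln c)) as [E|E]; [rewrite E; lra|].
  left; apply exp_increasing; nra.
Qed.

Lemma aseq_pos c t m : 0 < aseq c t m.
Proof. apply exp_pos. Qed.

Lemma aseq_le_c c t m : 0 < c < 1 -> 1 <= t m -> aseq c t m <= c.
Proof.
  intros Hc Ht. unfold aseq. rewrite <- (Rpower_1 c) at 2 by lra.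
  apply Rpower_antimono; [exact Hc|]. apply pow_R1_Rle; exact Ht.
Qed.

Lemma Fmap_bounded c t m s q :
  bounded s q -> bounded (s * s + aseq c t m * s) (Fmap c t m q).
Proof.
  destruct q as [z w]; intros [Hz Hw]; simpl in *.
  assert (Ha := aseq_pos c t m).
  assert (Hz0 := Cmod_ge_0 z). assert (Hw0 := Cmod_ge_0 w).
  unfold Fmap; split; simpl.
  - eapply Rle_trans; [apply Cmod_triangle|].
    rewrite !Cmod_mult, Cmod_R, Rabs_pos_eq by lra. nra.
  - rewrite Cmod_mult, Cmod_R, Rabs_pos_eq by lra. nra.
Qed.

Lemma orbit_bounded_persist c t r p m j :
  0 < c < 1 -> (forall n, (1 <= n)%nat -> 1 < t n < 2) -> 0 <= r <= 1 - c ->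
  bounded r (orbit c t m p) -> bounded r (orbit c t (m + j) p).
Proof.
  intros Hc Ht Hr Hm. induction j as [|j IH].
  - rewrite Nat.add_0_r; exact Hm.
  - rewrite Nat.add_succ_r.
    change (bounded r (Fmap c t (S (m + j)) (orbit c t (m + j) p))).
    assert (Hac : aseq c t (S (m + j)) <= c).
    { apply aseq_le_c; [exact Hc|]. destruct (Ht (S (m + j))); lia || lra. }
    eapply bounded_mono; [|apply Fmap_bounded, IH]. nra.
Qed.

Lemma eventually_uniformly_small c t K r :
  0 < c < 1 -> (forall n, (1 <= n)%nat -> 1 < t n < 2) -> 0 < r <= 1 - c ->
  compact_C2 K -> (forall p, K p -> Omega c t p) ->
  exists n0, forall n, (n0 <= n)%nat -> delta_le c t K n r.
Proof.
  intros Hc Ht Hr HK HO.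
  destruct (HK nat (fun i p => Cmod (fst (orbit c t i p)) < r /\
                               Cmod (snd (orbit c t i p)) < r)) as [l Hl].
  - intros i; apply orbit_small_open.
  - intros p Hp. destruct (HO p Hp) as [L1 L2].
    apply is_lim_seq_spec in L1, L2.
    destruct (L1 (mkposreal r (proj1 Hr))) as [M1 HM1].
    destruct (L2 (mkposreal r (proj1 Hr))) as [M2 HM2].
    exists (Nat.max M1 M2). simpl in *.
    specialize (HM1 (Nat.max M1 M2) ltac:(lia)). specialize (HM2 (Nat.max M1 M2) ltac:(lia)).
    rewrite Rminus_0_r, Rabs_pos_eq in HM1, HM2 by apply Cmod_ge_0. auto.
  - exists (list_max l). intros n Hn p Hp.
    destruct (Hl p Hp) as [i [Hi [H1 H2]]].
    assert (Hil : (i <= list_max l)%nat).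
    { apply (proj1 (Forall_forall _ l) (proj1 (list_max_le l _) (le_n _)) i Hi). }
    replace n with (i + (n - i))%nat by lia.
    apply orbit_bounded_persist; [exact Hc|exact Ht|lra|split; lra].
Qed.

(* Step 2, one step: if delta_m <= x but not delta_m <= a_(m+1), then
   a_(m+1) < x and so delta_(m+1) <= x^2 + a_(m+1) x <= 2 x^2. *)
Lemma delta_le_square c t K m x :
  0 <= x -> delta_le c t K m x -> ~ delta_le c t K m (aseq c t (m + 1)) ->
  delta_le c t K (m + 1) (2 * (x * x)).
Proof.
  intros Hx Hd Hnot.
  assert (Hlt : aseq c t (m + 1) < x).
  { destruct (Rlt_or_le (aseq c t (m + 1)) x) as [H|H]; [exact H|].
    exfalso; apply Hnot; exact (delta_le_mono c t K m x _ H Hd). }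
  intros p Hp. rewrite Nat.add_1_r in *.
  change (bounded (2 * (x * x)) (Fmap c t (S m) (orbit c t m p))).
  eapply bounded_mono; [|apply Fmap_bounded, Hd, Hp]. nra.
Qed.

Lemma delta_le_doubling c t K N m s j :
  (forall n, (N <= n)%nat -> ~ delta_le c t K n (aseq c t (n + 1))) ->
  (N <= m)%nat -> 0 <= s -> delta_le c t K m s ->
  delta_le c t K (m + j) ((2 * s) ^ (2 ^ j) / 2).
Proof.
  intros Hneg Hm Hs Hd. induction j as [|j IH].
  - rewrite Nat.add_0_r. eapply delta_le_mono; [|exact Hd]. simpl; lra.
  - assert (Hpow : 0 <= (2 * s) ^ (2 ^ j)) by (apply pow_le; lra).
    replace ((2 * s) ^ (2 ^ S j) / 2) with (2 * (((2 * s) ^ (2 ^ j) / 2) * ((2 * s) ^ (2 ^ j) / 2))).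
    + replace (m + S j)%nat with (m + j + 1)%nat by lia.
      apply delta_le_square; [lra|exact IH|apply Hneg; lia].
    + replace (2 ^ S j)%nat with (2 ^ j + 2 ^ j)%nat by (simpl; lia).
      rewrite pow_add. field.
Qed.

(* Step 3: the growth condition t_m <= 2^(k/m) means t_m^m <= 2^k,
   i.e. a_m >= c^(2^k). *)
Lemma aseq_ge_pow c t k m :
  0 < c < 1 -> (1 <= m)%nat -> 0 < t m -> t m <= Rpower 2 (INR k / INR m) ->
  c ^ (2 ^ k) <= aseq c t m.
Proof.
  intros Hc Hm Ht Htk. unfold aseq.
  rewrite <- Rpower_pow by lra. apply Rpower_antimono; [exact Hc|].
  rewrite pow_INR. replace (INR 2) with 2 by (simpl; lra).
  replace (2 ^ k) with (Rpower 2 (INR k / INR m) ^ m).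
  - apply pow_incr; lra.
  - rewrite <- Rpower_pow by apply exp_pos.
    rewrite Rpower_mult. replace (INR k / INR m * INR m) with (INR k).
    + apply Rpower_pow; lra.
    + field. apply not_0_INR; lia.
Qed.

Theorem lemma4p2 (c : R) (t : nat -> R) (K : C * C -> Prop) :
  0 < c < 1 ->
  (forall n, (1 <= n)%nat -> 1 < t n < 2) ->
  compact_C2 K ->
  (forall p, K p -> Omega c t p) ->
  (forall N : nat, exists n : nat, (N <= n)%nat /\
     exists k : nat, (1 <= k)%nat /\
       t (n + k + 1)%nat <= Rpower 2 (INR k / INR (n + k + 1))) ->
  forall N : nat, exists n : nat, (N <= n)%nat /\
    delta_le c t K n (aseq c t (n + 1)).
Proof.
  intros Hc Ht HK HO Hk N.
  apply NNPP; intros Hnone.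
  assert (Hneg : forall n, (N <= n)%nat -> ~ delta_le c t K n (aseq c t (n + 1)))
    by (intros n Hn Hd; apply Hnone; exists n; auto).
  set (r := c * (1 - c) / 2).
  assert (Hr : 0 < r <= 1 - c) by (unfold r; nra).
  assert (H2r : 2 * r <= c) by (unfold r; nra).
  destruct (eventually_uniformly_small c t K r Hc Ht Hr HK HO) as [n0 Hn0].
  destruct (Hk (Nat.max N n0)) as [n [Hn [k [Hk1 Htk]]]].
  assert (Hnk := delta_le_doubling c t K N n r k Hneg
                   ltac:(lia) ltac:(lra) (Hn0 n ltac:(lia))).
  assert (Hck : (2 * r) ^ (2 ^ k) <= c ^ (2 ^ k)) by (apply pow_incr; lra).
  assert (Hpos : 0 <= (2 * r) ^ (2 ^ k)) by (apply pow_le; lra).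
  assert (Ha : c ^ (2 ^ k) <= aseq c t (n + k + 1)).
  { apply aseq_ge_pow; [exact Hc|lia| |exact Htk].
    destruct (Ht (n + k + 1)%nat); lia || lra. }
  apply (Hneg (n + k)%nat); [lia|].
  eapply delta_le_mono; [|exact Hnk]. lra.
Qed.
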